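(* Let $\mathcal{S}$ be a finite set of points of interest and, for each history $X$, let $P(\cdot\mid X)$ be a distribution on $\mathcal{S}$ with $\Delta_P\le P(s\mid X)\le1-\Delta_P$ for all $(X,s)$, for some $\Delta_P\in(0,0.5)$. Let $\Theta=\{\theta_1,\dots,\theta_K\}\subset[1,\infty)$ be a finite set of distinct parameters with prior $P_0$ (positive on $\Theta$), and for $\theta\in\Theta$ define the transition model \[ P(s\mid X,a,\theta)=\begin{cases}P(s\mid X)^{1/\theta},& s=a,\\ P(s\mid X)\,\dfrac{1-P(a\mid X)^{1/\theta}}{1-P(a\mid X)}, & s\neq a.\end{cases} \] The true parameter is $\theta_*\in\Theta$. At each time $t=1,2,\dots$, given the history $X_t$, a recommendation $a_t\in\mathcal{S}$ is chosen based on the past, and $s_t\sim P(\cdot\mid X_t,a_t,\theta_* )$ is observed and appended to the history. Let $P_t(\theta)\propto P_0(\theta)\prod_{\tau=1}^tP(s_\tau\mid X_\tau,a_\tau,\theta)$ be the posterior at the end of time $t$, and let $\theta_t$ be sampled from $P_t$ at time step $t$. Define $\Delta_\theta=\min_{\theta\in\Theta,\theta\ne\theta_*}|\theta-\theta_*|$, \[ B=2\max\Big\{\max_{\theta\in\Theta}\max_{p\in[\Delta_P,1-\Delta_P]}\Big|\log\frac{p^{1/\theta}}{p^{1/\theta_*}}\Big|,\ \max_{\theta\in\Theta}\max_{p\in[\Delta_P,1-\Delta_P]}\Big|\log\frac{1-p^{1/\theta}}{1-p^{1/\theta_*}}\Big|\Big\}, \] \[ c_0=\frac{\min\{\ln(1/\Delta_P)\Delta_P,\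 \ln(1/(1-\Delta_P))(1-\Delta_P)\}}{(\max_{\theta\in\Theta}\theta)^2},\qquad \kappa=\Big(\max_{\theta\in\Theta}\theta-\min_{\theta\in\Theta}\theta\Big)^2. \] Then for every $t>2$, \[ \mathbb{E}\big[(\theta_t-\theta_* )^2\mid\theta_*\big]\le\frac{3}{e c_0^2t}\,\frac{1-P_0(\theta_* )}{P_0(\theta_* )}\exp\Big\{-c_0^2\Delta_\theta^2t+\sqrt{2B^2t\ln(K\kappa t^2)}\Big\}+\frac{1}{t^2}. \] *)

From HB Require Import structures.
From mathcomp Require Import all_boot all_order all_algebra.
From mathcomp Require Import all_classical all_reals all_analysis.
Set Implicit Arguments. Unset Strict Implicit. Unset Printing Implicit Defensive.
Import Order.TTheory GRing.Theory Num.Theory.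
Local Open Scope ring_scope.
Local Open Scope classical_set_scope.

Section Model.
Variables (R : realType) (S : finType).

Definition base_model := seq S -> S -> R.

Definition Ptrans (P : base_model) (X : seq S) (a : S) (th : R) (s : S) : R :=
  if s == a then P X s `^ th^-1
  else P X s * ((1 - P X a `^ th^-1) / (1 - P X a)).

(* a trajectory of length t : the pairs (a_tau, s_tau), tau = 1..t *)
Definition hist (X0 : seq S) (w : seq (S * S)) (i : nat) : seq S :=
  X0 ++ map snd (take i w).

Definition traj_prob t (P : base_model) (pi : seq (S * S) -> S -> R)
  (X0 : seq S) (th : R) (w : t.-tuple (S * S)) : R :=
  \prod_(i < t) (pi (take i w) (tnth w i).1 *
                 Ptrans P (hist X0 w i) (tnth w i).1 th (tnth w i).2).

Definition likelihood t (P : base_model) (X0 : seq S) (w : t.-tuple (S * S))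
  (th : R) : R :=
  \prod_(i < t) Ptrans P (hist X0 w i) (tnth w i).1 th (tnth w i).2.

Definition posterior K t (P : base_model) (X0 : seq S) (theta : 'I_K -> R)
  (P0 : 'I_K -> R) (w : t.-tuple (S * S)) (j : 'I_K) : R :=
  P0 j * likelihood P X0 w (theta j) /
  \sum_(k < K) P0 k * likelihood P X0 w (theta k).

(* E[(theta_t - theta_* )^2 | theta_*], with theta_t ~ P_t given the data *)
Definition expected_sq_err K t (P : base_model) (pi : seq (S * S) -> S -> R)
  (X0 : seq S) (theta : 'I_K -> R) (P0 : 'I_K -> R) (i0 : 'I_K) : R :=
  \sum_(w : t.-tuple (S * S))
     traj_prob P pi X0 (theta i0) w *
     \sum_(j < K) posterior P X0 theta P0 w j * (theta j - theta i0) ^+ 2.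

End Model.

Section Constants.
Variables (R : realType) (K : nat).

Definition theta_max (theta : 'I_K -> R) (i0 : 'I_K) : R :=
  \big[Num.max/theta i0]_(j < K) theta j.
Definition theta_min (theta : 'I_K -> R) (i0 : 'I_K) : R :=
  \big[Num.min/theta i0]_(j < K) theta j.

Definition Delta_theta (theta : 'I_K -> R) (i0 : 'I_K) : R :=
  inf [set `|theta j - theta i0| | j in [set j : 'I_K | j != i0]].

Definition Bconst (DP : R) (theta : 'I_K -> R) (i0 : 'I_K) : R :=
  2 * sup [set x : R | exists (j : 'I_K) (p : R),
       p \in `[DP, 1 - DP] /\
       (x = `| ln (p `^ (theta j)^-1 / p `^ (theta i0)^-1) | \/
        x = `| ln ((1 - p `^ (theta j)^-1) / (1 - p `^ (theta i0)^-1)) |)].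

Definition c0const (DP : R) (theta : 'I_K -> R) (i0 : 'I_K) : R :=
  Num.min (ln (DP^-1) * DP) (ln ((1 - DP)^-1) * (1 - DP)) /
  (theta_max theta i0) ^+ 2.

Definition kappa (theta : 'I_K -> R) (i0 : 'I_K) : R :=
  (theta_max theta i0 - theta_min theta i0) ^+ 2.

End Constants.

From HB Require Import structures.
From mathcomp Require Import all_boot all_order all_algebra.
From mathcomp Require Import all_classical all_reals all_analysis.
From mathcomp Require Import ring lra.
Import Order.TTheory GRing.Theory Num.Theory.
Local Open Scope ring_scope.

(* Write a_j for the expected posterior mass of θ_j when the data are generated
   under θ⋆, so that the error is Σ_j (θ_j - θ⋆)² a_j.  Bayes' rule gives
   a_j <= P0(θ_j) / P0(θ⋆), and Cauchy-Schwarz gives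
   a_j <= sqrt (P0(θ_j) / P0(θ⋆)) times the Bhattacharyya coefficient of the
   trajectory laws under θ_j and θ⋆.  Conditioning on the past step by step,
   that coefficient is at most ρ^t, where ρ bounds the one-step coefficient.
   A single step only sees the two-point laws (q, 1 - q) with q = p^(1/θ), so
   ρ <= 1 - (q_j - q⋆)² / 2 <= exp (- c0² (θ_j - θ⋆)² / 2), because
   |d/dθ p^(1/θ)| >= p ln(1/p) / θ².  Balancing the two bounds on a_j by AM-GM
   against the claimed expression finishes the proof: B >= 4 c0 |θ_j - θ⋆| pays
   for the factor 1/2 lost in the exponent, and when K κ t² < 1 the error is
   at most κ < 1/t². *)

Section RealFacts.
Context {R : realType}.
Implicit Types (x p q : R).

Lemma ln_le_sub1 {x} : 0 < x -> ln x <= x - 1.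
Proof. by move=> x0; have := @le_ln1Dx R (x - 1); rewrite subrKC; apply; lra. Qed.

Lemma expR1_le4 : expR 1 <= 4 :> R.
Proof.
have e_half_le2 : expR 2^-1 <= 2 :> R.
  have := expRxMexpNx_1 (2^-1 : R); have := expR_ge1Dx (- 2^-1 : R).
  have := expR_gt0 (2^-1 : R); nra.
have -> : 1 = 2%:R * 2^-1 :> R by rewrite mulfV.
by rewrite expRM_natl; have := expR_gt0 (2^-1 : R); nra.
Qed.

Lemma mul_le_amgm {A : R} (u v : R) : 0 < A -> u * v <= A * u ^+ 2 + v ^+ 2 / (4 * A).
Proof.
move=> A0; rewrite -(ler_pM2r (_ : 0 < 4 * A)) ?mulr_gt0 //.
have -> : (A * u ^+ 2 + v ^+ 2 / (4 * A)) * (4 * A) = (2 * A * u) ^+ 2 + v ^+ 2.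
  by field; rewrite gt_eqF.
by have := sqr_ge0 (2 * A * u - v); lra.
Qed.

Lemma le_sqrt_mul x u v : 0 <= x -> x <= u -> x <= v -> x <= Num.sqrt (u * v).
Proof.
move=> x0 xu xv; rewrite -(ger0_norm x0) -sqrtr_sqr ler_sqrt ?expr2 ?ler_pM //.
by rewrite mulr_ge0 // (le_trans x0).
Qed.

Lemma sqrtr_prod (I : Type) (r : seq I) (F : I -> R) : (forall i, 0 <= F i) ->
  Num.sqrt (\prod_(i <- r) F i) = \prod_(i <- r) Num.sqrt (F i).
Proof.
move=> F0; elim: r => [|i r IH]; first by rewrite !big_nil sqrtr1.
by rewrite !big_cons sqrtrM ?IH //; apply: prodr_ge0.
Qed.

Lemma bhattacharyya2_le {p q} : 0 <= p <= 1 -> 0 <= q <= 1 ->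
  Num.sqrt (p * q) + Num.sqrt ((1 - p) * (1 - q)) <= 1 - (p - q) ^+ 2 / 2.
Proof.
move=> /andP[p0 p1] /andP[q0 q1].
rewrite !sqrtrM ?subr_ge0 //.
set a := Num.sqrt p; set b := Num.sqrt q.
set c := Num.sqrt (1 - p); set d := Num.sqrt (1 - q).
have [a0 b0 c0 d0] : [/\ 0 <= a, 0 <= b, 0 <= c & 0 <= d] by split; apply: sqrtr_ge0.
have [-> ->] : p = a ^+ 2 /\ q = b ^+ 2 by rewrite !sqr_sqrtr.
have ac : a ^+ 2 + c ^+ 2 = 1 by rewrite !sqr_sqrtr ?subr_ge0 //; lra.
have bd : b ^+ 2 + d ^+ 2 = 1 by rewrite !sqr_sqrtr ?subr_ge0 //; lra.
(* [(a^2 - b^2)^2] factors as [(a - b)^2 (a + b)^2] and as [(c - d)^2 (c + d)^2],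
   while [1/(a + b)^2 + 1/(c + d)^2 >= 1/(s (2 - s)) >= 1] for [s = a^2 + b^2]. *)
set s := a ^+ 2 + b ^+ 2; set X := (a ^+ 2 - b ^+ 2) ^+ 2.
have Xab : X <= (a - b) ^+ 2 * (2 * s).
  have -> : X = (a - b) ^+ 2 * (a + b) ^+ 2 by rewrite /X; ring.
  by apply: ler_wpM2l; [apply: sqr_ge0 | have := sqr_ge0 (a - b); rewrite /s; lra].
have Xcd : X <= (c - d) ^+ 2 * (2 * (2 - s)).
  have -> : X = (c - d) ^+ 2 * (c + d) ^+ 2.
    by rewrite /X -[a ^+ 2](addrK (c ^+ 2)) -[b ^+ 2](addrK (d ^+ 2)) ac bd; ring.
  by apply: ler_wpM2l; [apply: sqr_ge0 | have := sqr_ge0 (c - d); rewrite /s; lra].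
have s02 : 0 <= s <= 2.
  have := sqr_ge0 a; have := sqr_ge0 b; have := sqr_ge0 c; have := sqr_ge0 d.
  by rewrite /s; lra.
have : X <= (a - b) ^+ 2 + (c - d) ^+ 2.
  have := sqr_ge0 (s - 1); have := sqr_ge0 (a - b); have := sqr_ge0 (c - d).
  nra.
have : (a - b) ^+ 2 + (c - d) ^+ 2 = 2 - 2 * (a * b + c * d) by lra.
lra.
Qed.

End RealFacts.

Section EntropyBounds.
Context {R : realType}.
Implicit Types (a p x y M : R).

Definition entropy_floor a : R :=
  Num.min (ln a^-1 * a) (ln (1 - a)^-1 * (1 - a)).

Lemma entropy_floor_gt0 a : 0 < a < 1 -> 0 < entropy_floor a.
Proof.
move=> /andP[a0 a1]; rewrite lt_min !mulr_gt0 ?ln_gt0 ?invf_gt1 //; lra.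
Qed.

Lemma entropy_floor_le1 {a} : 0 < a -> entropy_floor a <= 1.
Proof.
move=> a0; rewrite ge_min; apply/orP; left.
have ai : 0 < a^-1 by rewrite invr_gt0.
have := ler_wpM2r (ltW a0) (ln_le_sub1 ai).
by rewrite mulrBl mulVf ?gt_eqF //; lra.
Qed.

(* [p ln(1/p)] is concave, so on [[a, 1 - a]] it is minimal at an endpoint. *)
Lemma entropy_floor_le {a p} : 0 < a -> a <= p <= 1 - a ->
  entropy_floor a <= p * - ln p.
Proof.
move=> a0 /andP[ap pb]; have p0 : 0 < p by lra.
have b0 : 0 < 1 - a by lra.
rewrite /entropy_floor !lnV ?posrE //.
have lnpb : forall b, 0 < b -> b * (ln p - ln b) <= p - b.
  move=> b bpos; have := ler_wpM2l (ltW bpos) (ln_le_sub1 (divr_gt0 p0 bpos)).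
  by rewrite ln_div ?posrE // !mulrBr mulrCA mulfV ?gt_eqF //; lra.
rewrite ge_min; have [lnp1|lnp1] := lerP 1 (- ln p); apply/orP; [left|right].
- have := lnpb a a0; have : 0 <= (p - a) * (- ln p - 1) by apply: mulr_ge0; lra.
  lra.
- have := lnpb _ b0.
  have : 0 <= (1 - a - p) * (ln p + 1) by apply: mulr_ge0; lra.
  lra.
Qed.

Lemma powR_inv_in01 {p x} : 0 < p < 1 -> 0 < x -> 0 < p `^ x^-1 < 1.
Proof.
move=> /andP[p0 p1] x0; rewrite powR_gt0 //= /powR gt_eqF // expR_lt1.
by rewrite pmulr_rlt0 ?invr_gt0 // ln_lt0 // p0 p1.
Qed.

Lemma powR_inv_dist_ge {p x y M} : 0 < p < 1 -> 1 <= x <= M -> 1 <= y <= M ->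
  p * - ln p * `|x - y| / M ^+ 2 <= `|p `^ x^-1 - p `^ y^-1|.
Proof.
move=> /andP[p0 p1].
wlog yx : x y / y <= x.
  move=> H hx hy; have [yx|/ltW xy] := leP y x; first exact: H.
  by rewrite distrC [in X in _ <= X]distrC; apply: H.
move=> /andP[x1 xM] /andP[y1 yM]; set L := - ln p.
have L0 : 0 < L by rewrite oppr_gt0 ln_lt0 // p0 p1.
have -> : p `^ x^-1 - p `^ y^-1 = expR (- (L / y)) * (expR (L / y - L / x) - 1).
  rewrite /powR gt_eqF // mulrBr mulr1 -expRD.
  by congr (expR _ - expR _); rewrite /L; field; lra.
have gap : L * (x - y) / M ^+ 2 <= L / y - L / x.
  have -> : L / y - L / x = L * (x - y) / (x * y) by field; lra.
  apply: ler_wpM2l; first by rewrite mulr_ge0 //; lra.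
  rewrite lef_pV2 ?posrE ?mulr_gt0 ?exprn_gt0; try lra.
  by rewrite expr2 ler_pM //; lra.
have p_le : p <= expR (- (L / y)).
  rewrite -[p in p <= _]lnK ?posrE // ler_expR -[ln p]opprK lerN2.
  by rewrite ler_pdivrMr ?ler_peMr //; lra.
have gap0 : 0 <= L * (x - y) / M ^+ 2.
  by rewrite !mulr_ge0 ?invr_ge0 ?exprn_ge0 //; lra.
have expR_gap := expR_ge1Dx (L / y - L / x).
have gap1 : 0 <= expR (L / y - L / x) - 1 by lra.
rewrite [`|x - y|]ger0_norm ?subr_ge0 // (ger0_norm (mulr_ge0 (expR_ge0 _) gap1)).
have -> : p * L * (x - y) / M ^+ 2 = p * (L * (x - y) / M ^+ 2) by rewrite !mulrA.
by apply: ler_pM; lra.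
Qed.

End EntropyBounds.

Section TupleSums.
Context {R : realType}.

Lemma sum_tuple_cons (T : finType) n (F : n.+1.-tuple T -> R) :
  \sum_(w : n.+1.-tuple T) F w = \sum_x \sum_(w : n.-tuple T) F [tuple of x :: w].
Proof.
rewrite pair_big /= (reindex (fun p : T * n.-tuple T => [tuple of p.1 :: p.2])) //.
exists (fun w => (thead w, [tuple of behead w])) => [[x w] _ | w _].
  by rewrite theadE; congr pair; apply: val_inj.
by rewrite /= -tuple_eta.
Qed.

Lemma sum_tuple_prod_kernel_le {T : finType} (g : seq T -> T -> R) (rho : R) :
  (forall h x, 0 <= g h x) -> (forall h, \sum_x g h x <= rho) ->
  forall n h, \sum_(w : n.-tuple T) \prod_(i < n) g (h ++ take i w) (tnth w i)
    <= rho ^+ n.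
Proof.
move=> g0 g_rho; have rho0 : 0 <= rho by apply: le_trans (g_rho [::]); apply: sumr_ge0.
elim=> [|n IH] h.
  by rewrite (eq_bigr (fun=> 1)) => [|w _]; rewrite ?big_ord0 // sumr_const card_tuple.
rewrite sum_tuple_cons.
apply: (@le_trans _ _ (\sum_x g h x * rho ^+ n)); last first.
  rewrite -mulr_suml exprS.
  by apply: ler_wpM2r; [exact: exprn_ge0 | exact: g_rho].
apply: ler_sum => x _.
have -> : \sum_(w : n.-tuple T) \prod_(i < n.+1) g (h ++ take i [tuple of x :: w])
            (tnth [tuple of x :: w] i)
    = g h x * \sum_(w : n.-tuple T) \prod_(i < n) g (rcons h x ++ take i w) (tnth w i).
  rewrite mulr_sumr; apply: eq_bigr => w _; rewrite big_ord_recl /= cats0 tnth0.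
  by congr (_ * _); apply: eq_bigr => i _; rewrite tnthS -cats1 -catA.
by apply: ler_wpM2l; last exact: IH.
Qed.

Lemma sum_tuple_prod_policy_kernel_le {A S : finType}
    (f : seq (A * S) -> A -> R) (g : seq (A * S) -> A -> S -> R) (rho : R) :
  (forall h a, 0 <= f h a) -> (forall h, \sum_a f h a = 1) ->
  (forall h a s, 0 <= g h a s) -> (forall h a, \sum_s g h a s <= rho) ->
  forall n, \sum_(w : n.-tuple (A * S))
     \prod_(i < n) (f (take i w) (tnth w i).1 * g (take i w) (tnth w i).1 (tnth w i).2)
     <= rho ^+ n.
Proof.
move=> f0 f1 g0 g_rho n.
have := sum_tuple_prod_kernel_le (fun h x => f h x.1 * g h x.1 x.2) rho _ _ n [::].
under eq_bigr do under eq_bigr do rewrite cat0s.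
apply=> [h x|h]; first exact: mulr_ge0.
rewrite -(pair_big xpredT xpredT (fun a s => f h a * g h a s)) /=.
apply: (@le_trans _ _ (\sum_a f h a * rho)); last by rewrite -mulr_suml f1 mul1r.
by apply: ler_sum => a _; rewrite -mulr_sumr ler_wpM2l.
Qed.

End TupleSums.

Section Constants.
Context {R : realType} {K : nat}.
Variables (theta : 'I_K -> R) (i0 : 'I_K).
Local Open Scope classical_set_scope.

Lemma theta_max_ge j : theta j <= theta_max theta i0.
Proof. exact: le_bigmax. Qed.

Lemma theta_min_le j : theta_min theta i0 <= theta j.
Proof. exact: bigmin_le. Qed.

Lemma sqr_dist_le_kappa j : (theta j - theta i0) ^+ 2 <= kappa theta i0.
Proof.
have := theta_max_ge j; have := theta_max_ge i0.
have := theta_min_le j; have := theta_min_le i0.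
rewrite /kappa; set M := theta_max _ _; set m := theta_min _ _ => mi mj Mi Mj.
have : 0 <= (M - m - (theta j - theta i0)) * (M - m + (theta j - theta i0)).
  by apply: mulr_ge0; lra.
lra.
Qed.

Lemma Delta_theta_le j : j != i0 -> 0 <= Delta_theta theta i0 <= `|theta j - theta i0|.
Proof.
move=> ji; rewrite /Delta_theta; set E := [set _ | _ in _].
apply/andP; split.
- by apply: lb_le_inf => [|_ [k _ <-]]; first by exists `|theta j - theta i0|, j.
- by apply: ge_inf; [exists 0 => _ [k _ <-] | exists j].
Qed.

Hypothesis theta_ge1 : forall j, 1 <= theta j.

Lemma c0const_in01 (DP : R) : 0 < DP < 1 -> 0 < c0const DP theta i0 <= 1.
Proof.
move=> DPI; have /andP[DP0 _] := DPI; set M := theta_max theta i0.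
change (c0const DP theta i0) with (entropy_floor DP / M ^+ 2).
have M1 : 1 <= M := le_trans (theta_ge1 i0) (theta_max_ge i0).
have M2 : 1 <= M ^+ 2 by rewrite expr2; nra.
have M20 : 0 < M ^+ 2 := lt_le_trans ltr01 M2.
rewrite divr_gt0 ?entropy_floor_gt0 //= ler_pdivrMr // mul1r.
exact: le_trans (entropy_floor_le1 DP0) M2.
Qed.

Lemma ln_powR_ratio_le {DP p x y : R} : 0 < DP -> DP <= p <= 1 ->
  1 <= x -> 1 <= y -> `|ln (p `^ x^-1 / p `^ y^-1)| <= - ln DP.
Proof.
move=> DP0 /andP[pl pu] x1 y1; have p0 : 0 < p by lra.
rewrite ln_div ?posrE ?powR_gt0 // !ln_powR -mulrBl normrM.
have lnp : `|ln p| <= - ln DP by rewrite ler0_norm ?ln_le0 // lerN2 ler_ln ?posrE.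
have ixy : `|x^-1 - y^-1| <= 1.
  have : 0 < x^-1 <= 1 by rewrite invr_gt0 invf_le1; lra.
  have : 0 < y^-1 <= 1 by rewrite invr_gt0 invf_le1; lra.
  by rewrite ler_norml; lra.
by rewrite -[X in _ <= X]mul1r ler_pM.
Qed.

Lemma ln_one_sub_powR_ratio_le {b p x y : R} : 0 < p <= b -> b < 1 ->
  0 < x -> 0 < y -> `|ln ((1 - p `^ x^-1) / (1 - p `^ y^-1))|
    <= - ln (1 - b `^ x^-1) - ln (1 - b `^ y^-1).
Proof.
move=> /andP[p0 pb] b1 x0 y0; have b01 : 0 < b < 1 by lra.
have p01 : 0 < p < 1 by lra.
have ln_bounds z : 0 < z -> 0 < 1 - p `^ z^-1 /\
    ln (1 - b `^ z^-1) <= ln (1 - p `^ z^-1) <= 0.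
  move=> z0; have /andP[_ qb1] := powR_inv_in01 b01 z0.
  have /andP[qp0 _] := powR_inv_in01 p01 z0.
  have qpb : p `^ z^-1 <= b `^ z^-1.
    by apply: ge0_ler_powR; rewrite ?nnegrE ?invr_ge0; lra.
  by split; [|rewrite ler_ln ?posrE ?ln_le0]; lra.
have [u0 /andP[ub u1]] := ln_bounds x x0; have [v0 /andP[vb v1]] := ln_bounds y y0.
by rewrite ln_div ?posrE // ler_norml; lra.
Qed.

Lemma has_ubound_Bset {DP : R} : 0 < DP < 1 / 2 ->
  has_ubound [set x : R | exists (j : 'I_K) (p : R),
    p \in `[DP, 1 - DP] /\
    (x = `| ln (p `^ (theta j)^-1 / p `^ (theta i0)^-1) | \/
     x = `| ln ((1 - p `^ (theta j)^-1) / (1 - p `^ (theta i0)^-1)) |)].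
Proof.
move=> /andP[DP0 DP1]; have th0 k : 0 < theta k by have := theta_ge1 k; lra.
pose T k := - ln (1 - (1 - DP) `^ (theta k)^-1).
have T0 k : 0 <= T k.
  rewrite oppr_ge0 ln_le0 //; have := powR_ge0 (1 - DP) (theta k)^-1; lra.
have T_le k : T k <= \sum_l T l by rewrite (bigD1 k) //= lerDl sumr_ge0.
have lnDP : 0 <= - ln DP by rewrite oppr_ge0 ln_le0 //; lra.
exists (- ln DP + 2 * \sum_l T l) => _ [k [p [+ [->|->]]]];
  rewrite in_setE /= in_itv /= => /andP[pl pu].
- have pI : DP <= p <= 1 by lra.
  have := ln_powR_ratio_le DP0 pI (theta_ge1 k) (theta_ge1 i0).
  have : 0 <= \sum_l T l by apply: sumr_ge0.
  lra.
- have pI : 0 < p <= 1 - DP by lra.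
  have b1 : 1 - DP < 1 by lra.
  have := ln_one_sub_powR_ratio_le pI b1 (th0 k) (th0 i0).
  by have := T_le k; have := T_le i0; rewrite /T; lra.
Qed.

Lemma Bconst_ge (DP : R) j : 0 < DP < 1 / 2 ->
  4 * c0const DP theta i0 * `|theta j - theta i0| <= Bconst DP theta i0.
Proof.
move=> DPI; have /andP[DP0 DP1] := DPI.
have th0 k : 0 < theta k by have := theta_ge1 k; lra.
set d := `|theta j - theta i0|; set M := theta_max theta i0.
have lnDP0 : ln DP < 0 by rewrite ln_lt0 // DP0; lra.
have M0 : 0 < M by have := theta_max_ge i0; have := th0 i0; rewrite -/M; lra.
set u := - ln DP * d / M ^+ 2.
have u_le : u <= `|ln (DP `^ (theta j)^-1 / DP `^ (theta i0)^-1)|.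
  rewrite ln_div ?posrE ?powR_gt0 // !ln_powR -mulrBl normrM mulrC.
  rewrite (ltr0_norm lnDP0) /u -mulrA; apply: ler_wpM2l; first lra.
  have -> : (theta j)^-1 - (theta i0)^-1 = (theta i0 - theta j) / (theta j * theta i0).
    by field; rewrite !gt_eqF.
  rewrite normrM distrC -/d ger0_norm; last by rewrite invr_ge0 mulr_ge0 ?ltW.
  apply: ler_wpM2l; first exact: normr_ge0.
  rewrite lef_pV2 ?posrE ?mulr_gt0 ?exprn_gt0 //.
  by rewrite expr2 ler_pM ?theta_max_ge ?ltW.
have u_ge : 4 * c0const DP theta i0 * d <= 2 * u.
  change (c0const DP theta i0) with (entropy_floor DP / M ^+ 2).
  have m_le : entropy_floor DP <= DP * - ln DP.
    by rewrite /entropy_floor ge_min lnV ?posrE // mulrC lexx.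
  have u0 : 0 <= u.
    by rewrite /u !mulr_ge0 ?normr_ge0 ?invr_ge0 ?exprn_ge0 ?ltW //; lra.
  have : entropy_floor DP * (d / M ^+ 2) <= DP * u.
    have -> : DP * u = DP * - ln DP * (d / M ^+ 2) by rewrite /u; ring.
    apply: ler_wpM2r => //.
    exact: divr_ge0 (normr_ge0 _) (exprn_ge0 _ (ltW M0)).
  have : DP * u <= 2^-1 * u by apply: ler_wpM2r => //; lra.
  rewrite !mulrA; lra.
apply: (le_trans u_ge); rewrite /Bconst ler_pM2l //.
apply: (le_trans u_le); apply: (ub_le_sup (has_ubound_Bset DPI)).
by exists j, DP; split; [rewrite in_setE /= in_itv /=; lra | left].
Qed.

End Constants.

Section Balancing.
Context {R : realType}.
Variables (c0 t K kap B y d : R).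

Local Notation v := (c0 ^+ 2 * d * t).
Local Notation Z := (K * kap * t ^+ 2).
Local Notation eps := (Num.sqrt (2 * B ^+ 2 * t * ln Z)).
(* [A] is the coefficient of the prior ratio in the claimed bound. *)
Local Notation A := (3 / (expR 1 * c0 ^+ 2 * t) * expR (- y + eps)).

Lemma balance_constE : 0 < c0 -> 0 < t -> A = 3 * expR (- y + eps - 1) / (c0 ^+ 2 * t).
Proof. by move=> c00 t0; rewrite expRB; field; rewrite !gt_eqF ?expR_gt0. Qed.

Lemma balance_const_gt0 : 0 < c0 -> 0 < t -> 0 < A.
Proof.
by move=> c00 t0; rewrite balance_constE // !divr_gt0 ?mulr_gt0 ?exprn_gt0 ?expR_gt0.
Qed.

Lemma le_balance_const : 0 < c0 -> 0 < t -> 0 <= d -> y <= v -> 2 * v <= eps -> d <= A.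
Proof.
move=> c00 t0 d0 yv small.
rewrite balance_constE // ler_pdivlMr ?mulr_gt0 ?exprn_gt0 //.
have := expR_ge1Dx (- y + eps - 1); have := mulr_ge0 (mulr_ge0 (sqr_ge0 c0) d0) (ltW t0).
lra.
Qed.

Lemma lnZ_le_eps : 0 < t -> 1 <= Z -> 16 * c0 ^+ 2 * d <= B ^+ 2 ->
  eps < 2 * v -> 16 * ln Z <= eps.
Proof.
move=> t0 Z1 hB large; have L0 : 0 <= ln Z := ln_ge0 Z1.
have eps0 : 0 <= eps := sqrtr_ge0 _.
have eps2 : 32 * v * ln Z <= eps ^+ 2.
  have tL0 : 0 <= 2 * t * ln Z by rewrite mulr_ge0 // mulr_ge0 ?ltW.
  rewrite sqr_sqrtr (_ : 2 * B ^+ 2 * t * ln Z = B ^+ 2 * (2 * t * ln Z)); try ring.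
    by have := ler_wpM2r tL0 hB; lra.
  exact: mulr_ge0 (sqr_ge0 _) tL0.
nra.
Qed.

Lemma gap_remainder_le : 0 < c0 <= 1 -> 3 <= t -> 1 <= K -> 0 <= d <= kap -> 1 <= Z ->
  16 * c0 ^+ 2 * d <= B ^+ 2 -> y <= v -> eps < 2 * v ->
  d ^+ 2 * expR (- v) / (4 * A) <= 1 / (K * t ^+ 2).
Proof.
move=> /andP[c00 c01] t3 K1 /andP[d0 dk] Z1 hB yv large.
have t0 : 0 < t by lra.
have L_le := lnZ_le_eps t0 Z1 hB large.
have L0 : 0 <= ln Z := ln_ge0 Z1.
have v0 : 0 <= v := mulr_ge0 (mulr_ge0 (sqr_ge0 c0) d0) (ltW t0).
have Kt0 : 0 < K * t ^+ 2 by rewrite mulr_gt0 ?exprn_gt0 //; lra.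
set E := expR (- y + eps - 1); set F := expR (1 - eps).
have -> : d ^+ 2 * expR (- v) / (4 * A) = d * v * (expR (- v) / E) / 12.
  by rewrite balance_constE // -/E; field; rewrite !gt_eqF ?expR_gt0.
have vE : expR (- v) / E <= F.
  by rewrite ler_pdivrMr ?expR_gt0 // /E /F -expRD ler_expR; lra.
have dv : K * t ^+ 2 * d * v <= Z ^+ 2 / 3.
  have kap0 : 0 <= kap by lra.
  have Kt_d : K * t ^+ 2 * d <= Z.
    by rewrite [Z]mulrAC; apply: ler_wpM2l; rewrite // mulr_ge0 ?sqr_ge0 //; lra.
  have c0_dt : c0 ^+ 2 * (d * t) <= d * t.
    by apply: ler_piMl; [exact: mulr_ge0 d0 (ltW t0) | rewrite expr_le1 // ltW].
  have dt_kt : d * t <= kap * t by apply: ler_wpM2r; [exact: ltW | exact: dk].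
  have kt_kt2 : kap * t * 3 <= kap * t * t.
    by apply: ler_wpM2l; [exact: mulr_ge0 kap0 (ltW t0) |].
  have kt2_Z : kap * t ^+ 2 <= K * (kap * t ^+ 2) by rewrite ler_peMl // mulr_ge0 ?sqr_ge0.
  have v_le : v <= Z / 3 by rewrite expr2 in kt2_Z *; lra.
  have := ler_pM (mulr_ge0 (ltW Kt0) d0) v0 Kt_d v_le; lra.
have ZF : Z ^+ 2 * F <= 4.
  rewrite -[Z]lnK ?posrE; last lra.
  rewrite -expRM_natl -expRD; apply: le_trans expR1_le4; rewrite ler_expR; lra.
have : K * t ^+ 2 * (d * v * (expR (- v) / E)) <= K * t ^+ 2 * (d * v * F).
  by apply: ler_wpM2l; [exact: ltW | apply: ler_wpM2l; first exact: mulr_ge0].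
have : K * t ^+ 2 * d * v * F <= Z ^+ 2 / 3 * F.
  by apply: ler_wpM2r => //; exact: expR_ge0.
rewrite ler_pdivlMr //; lra.
Qed.

Lemma sq_gap_mass_le (c a : R) :
  0 < c0 <= 1 -> 3 <= t -> 1 <= K -> 0 <= d <= kap -> 1 <= Z ->
  16 * c0 ^+ 2 * d <= B ^+ 2 -> y <= v ->
  0 <= a <= c -> a <= Num.sqrt c * expR (- (v / 2)) ->
  d * a <= c * A + 1 / (K * t ^+ 2).
Proof.
move=> c0I t3 K1 dI Z1 hB yv /andP[a0 ac] a_sqrt.
have /andP[c00 _] := c0I; have /andP[d0 _] := dI; have t0 : 0 < t by lra.
have A0 := balance_const_gt0 c00 t0.
have [small|large] := lerP (2 * v) eps.
- have dA := le_balance_const c00 t0 d0 yv small.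
  have := ler_wpM2l d0 ac; have := ler_wpM2r (le_trans a0 ac) dA.
  have : 0 <= 1 / (K * t ^+ 2) by rewrite divr_ge0 ?mulr_ge0 ?sqr_ge0 //; lra.
  lra.
- have := gap_remainder_le c0I t3 K1 dI Z1 hB yv large.
  have := mul_le_amgm (Num.sqrt c) (d * expR (- (v / 2))) A0.
  rewrite sqr_sqrtr ?(le_trans a0 ac) // exprMn -expRM_natl.
  rewrite (_ : 2%:R * - (v / 2) = - v); last by field.
  have := ler_wpM2l d0 a_sqrt.
  lra.
Qed.

End Balancing.

Section Model.
Context {R : realType} {S : finType} {P : seq S -> S -> R} {DP : R}.
Hypotheses (DP_gt0 : 0 < DP) (P_sum1 : forall X, \sum_s P X s = 1)
  (P_range : forall X s, DP <= P X s <= 1 - DP).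

Lemma P_in01 X s : 0 < P X s < 1.
Proof. by have := P_range X s; have := DP_gt0; lra. Qed.

Lemma sum_P_neq X a : \sum_(s | s != a) P X s = 1 - P X a.
Proof. by have := P_sum1 X; rewrite (bigD1 a) //=; lra. Qed.

Lemma Ptrans_gt0 X a th s : 0 < th -> 0 < Ptrans P X a th s.
Proof.
move=> th0; have /andP[p0 p1] := P_in01 X s; have /andP[pa0 pa1] := P_in01 X a.
have /andP[_ q1] := powR_inv_in01 (P_in01 X a) th0.
rewrite /Ptrans; case: eqP => _; first exact: powR_gt0.
by rewrite !mulr_gt0 ?invr_gt0 ?subr_gt0.
Qed.

Lemma Ptrans_sum1 X a th : \sum_s Ptrans P X a th s = 1.
Proof.
have /andP[_ pa1] := P_in01 X a.
rewrite (bigD1 a) //= {1}/Ptrans eqxx.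
under eq_bigr => s /negbTE sa do rewrite /Ptrans sa.
by rewrite -mulr_suml sum_P_neq; field; lra.
Qed.

Lemma Ptrans_bhattacharyya X a th1 th2 : 0 < th1 -> 0 < th2 ->
  \sum_s Num.sqrt (Ptrans P X a th1 s * Ptrans P X a th2 s) =
  Num.sqrt (P X a `^ th1^-1 * P X a `^ th2^-1) +
  Num.sqrt ((1 - P X a `^ th1^-1) * (1 - P X a `^ th2^-1)).
Proof.
move=> t10 t20; have /andP[pa0 pa1] := P_in01 X a.
have /andP[_ q11] := powR_inv_in01 (P_in01 X a) t10.
have /andP[_ q21] := powR_inv_in01 (P_in01 X a) t20.
rewrite (bigD1 a) //= /Ptrans eqxx; congr (_ + _).
set k := (1 - P X a `^ th1^-1) * (1 - P X a `^ th2^-1).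
have k0 : 0 <= k by rewrite mulr_ge0 // subr_ge0 ltW.
rewrite (eq_bigr (fun s => P X s / (1 - P X a) * Num.sqrt k)) => [|s /negbTE ->].
  by rewrite -!mulr_suml sum_P_neq mulfV ?mul1r // subr_eq0 gt_eqF.
rewrite (_ : _ * _ = (P X s / (1 - P X a)) ^+ 2 * k); last by rewrite /k; ring.
have /andP[ps0 _] := P_in01 X s.
by rewrite sqrtrM ?sqr_ge0 // sqrtr_sqr ger0_norm // divr_ge0 ?subr_ge0 ?ltW.
Qed.

Lemma Ptrans_bhattacharyya_le X a th1 th2 M : DP < 1 / 2 ->
  1 <= th1 <= M -> 1 <= th2 <= M ->
  \sum_s Num.sqrt (Ptrans P X a th1 s * Ptrans P X a th2 s) <=
  expR (- ((entropy_floor DP / M ^+ 2) ^+ 2 * (th1 - th2) ^+ 2 / 2)).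
Proof.
move=> DP1 th1I th2I; have pa01 := P_in01 X a.
have t10 : 0 < th1 by lra.
have t20 : 0 < th2 by lra.
rewrite Ptrans_bhattacharyya //.
have /andP[q10 q11] := powR_inv_in01 pa01 t10.
have /andP[q20 q21] := powR_inv_in01 pa01 t20.
have q1I : 0 <= P X a `^ th1^-1 <= 1 by lra.
have q2I : 0 <= P X a `^ th2^-1 <= 1 by lra.
apply: le_trans (bhattacharyya2_le q1I q2I) _.
set c := entropy_floor DP / M ^+ 2.
have M0 : 0 < M by lra.
have gap : c * `|th1 - th2| <= `|P X a `^ th1^-1 - P X a `^ th2^-1|.
  apply: le_trans (powR_inv_dist_ge pa01 th1I th2I).
  rewrite mulrAC; apply: ler_wpM2r; first by rewrite invr_ge0 exprn_ge0 ?ltW.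
  by apply: ler_wpM2r; [exact: normr_ge0 | exact: entropy_floor_le].
have c0 : 0 <= c.
  have DP01 : 0 < DP < 1 by rewrite DP_gt0 /=; lra.
  by rewrite divr_ge0 ?exprn_ge0 ?ltW ?entropy_floor_gt0.
have : (c * `|th1 - th2|) ^+ 2 <= `|P X a `^ th1^-1 - P X a `^ th2^-1| ^+ 2.
  by apply: lerXn2r; rewrite // nnegrE mulr_ge0.
rewrite exprMn !real_normK ?num_real //.
by have := expR_ge1Dx (- (c ^+ 2 * (th1 - th2) ^+ 2 / 2)); lra.
Qed.

Lemma likelihood_gt0 X0 {t} (w : t.-tuple (S * S)) th :
  0 < th -> 0 < likelihood P X0 w th.
Proof. by move=> th0; apply: prodr_gt0 => i _; apply: Ptrans_gt0. Qed.

Section Inference.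
Context {policy : seq (S * S) -> S -> R} {X0 : seq S}.
Context {K : nat} {theta : 'I_K -> R} {P0 : 'I_K -> R} {i0 : 'I_K}.
Hypotheses (policy_ge0 : forall h a, 0 <= policy h a)
  (policy_sum1 : forall h, \sum_a policy h a = 1).
Hypotheses (theta_ge1 : forall j, 1 <= theta j) (P0_gt0 : forall j, 0 < P0 j).

Lemma traj_probE {t} th (w : t.-tuple (S * S)) :
  traj_prob P policy X0 th w =
  (\prod_(i < t) policy (take i w) (tnth w i).1) * likelihood P X0 w th.
Proof. by rewrite /traj_prob /likelihood big_split. Qed.

Lemma traj_prob_ge0 {t} th (w : t.-tuple (S * S)) :
  0 < th -> 0 <= traj_prob P policy X0 th w.
Proof.
move=> th0; rewrite traj_probE.
by apply: mulr_ge0; [exact: prodr_ge0 | exact/ltW/likelihood_gt0].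
Qed.

Lemma sum_traj_prob_le1 t th : 0 < th ->
  \sum_(w : t.-tuple (S * S)) traj_prob P policy X0 th w <= 1.
Proof.
move=> th0; rewrite -(expr1n _ t).
apply: (sum_tuple_prod_policy_kernel_le policy
  (fun h a s => Ptrans P (X0 ++ map snd h) a th s)) => // [h a s|h a].
- exact/ltW/Ptrans_gt0.
- by rewrite Ptrans_sum1.
Qed.

Lemma sum_sqrt_traj_prob_le t {th1 th2 M} : DP < 1 / 2 ->
  1 <= th1 <= M -> 1 <= th2 <= M ->
  \sum_(w : t.-tuple (S * S))
     Num.sqrt (traj_prob P policy X0 th1 w * traj_prob P policy X0 th2 w)
  <= expR (- ((entropy_floor DP / M ^+ 2) ^+ 2 * (th1 - th2) ^+ 2 / 2)) ^+ t.
Proof.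
move=> DP1 th1I th2I; have t10 : 0 < th1 by lra.
have t20 : 0 < th2 by lra.
pose g (h : seq (S * S)) a s :=
  Num.sqrt (Ptrans P (X0 ++ map snd h) a th1 s * Ptrans P (X0 ++ map snd h) a th2 s).
rewrite (eq_bigr (fun w : t.-tuple (S * S) => \prod_(i < t)
    (policy (take i w) (tnth w i).1 * g (take i w) (tnth w i).1 (tnth w i).2))) => [|w _].
  apply: sum_tuple_prod_policy_kernel_le => // [h a s|h a]; first exact: sqrtr_ge0.
  exact: Ptrans_bhattacharyya_le.
rewrite /traj_prob -big_split sqrtr_prod => [|i]; last first.
  by rewrite mulr_ge0 // mulr_ge0 // ltW // Ptrans_gt0.
apply: eq_bigr => i _.
by rewrite /= mulrACA -expr2 sqrtrM ?sqr_ge0 // sqrtr_sqr ger0_norm.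
Qed.

Let theta_gt0 j : 0 < theta j.
Proof. by have := theta_ge1 j; lra. Qed.

Let prior_ratio_ge0 j : 0 <= P0 j / P0 i0.
Proof. by rewrite divr_ge0 ?ltW. Qed.

Let weight_gt0 {t} (w : t.-tuple (S * S)) j : 0 < P0 j * likelihood P X0 w (theta j).
Proof. by rewrite mulr_gt0 ?likelihood_gt0. Qed.

Let weight_le_sum {t} (w : t.-tuple (S * S)) j :
  P0 j * likelihood P X0 w (theta j) <= \sum_k P0 k * likelihood P X0 w (theta k).
Proof. by rewrite (bigD1 j) //= lerDl sumr_ge0 // => k _; rewrite ltW. Qed.

Lemma posterior_ge0 {t} (w : t.-tuple (S * S)) j : 0 <= posterior P X0 theta P0 w j.
Proof. by rewrite divr_ge0 ?ltW // (lt_le_trans (weight_gt0 w j)). Qed.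

Lemma posterior_le1 {t} (w : t.-tuple (S * S)) j : posterior P X0 theta P0 w j <= 1.
Proof. by rewrite ler_pdivrMr ?mul1r // (lt_le_trans (weight_gt0 w j)). Qed.

Lemma sum_posterior {t} (w : t.-tuple (S * S)) : \sum_j posterior P X0 theta P0 w j = 1.
Proof. by rewrite -mulr_suml divff // gt_eqF // (lt_le_trans (weight_gt0 w i0)). Qed.

Lemma traj_prob_posterior_le {t} (w : t.-tuple (S * S)) j :
  traj_prob P policy X0 (theta i0) w * posterior P X0 theta P0 w j
    <= P0 j / P0 i0 * traj_prob P policy X0 (theta j) w.
Proof.
rewrite !traj_probE /posterior; set pis := \prod_(i < t) _.
set Z := \sum_k _; have Z0 : 0 < Z := lt_le_trans (weight_gt0 w i0) (weight_le_sum w i0).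
set Li := likelihood P X0 w (theta i0); set Lj := likelihood P X0 w (theta j).
have Lj0 : 0 < Lj := likelihood_gt0 X0 w _ (theta_gt0 j).
have pis0 : 0 <= pis by apply: prodr_ge0.
have -> : pis * Li * (P0 j * Lj / Z) = pis * (P0 j * Lj / P0 i0) * (P0 i0 * Li / Z).
  by field; rewrite !gt_eqF.
rewrite [X in _ <= X](_ : _ = pis * (P0 j * Lj / P0 i0) * 1); last first.
  by field; rewrite gt_eqF.
apply: ler_wpM2l.
  exact: mulr_ge0 pis0 (divr_ge0 (mulr_ge0 (ltW (P0_gt0 j)) (ltW Lj0)) (ltW (P0_gt0 i0))).
by rewrite ler_pdivrMr // mul1r weight_le_sum.
Qed.

Definition expected_posterior t j : R :=
  \sum_(w : t.-tuple (S * S))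
    traj_prob P policy X0 (theta i0) w * posterior P X0 theta P0 w j.

Lemma expected_sq_errE t : expected_sq_err t P policy X0 theta P0 i0 =
  \sum_j (theta j - theta i0) ^+ 2 * expected_posterior t j.
Proof.
rewrite /expected_sq_err; under eq_bigr do rewrite mulr_sumr.
rewrite exchange_big /=; apply: eq_bigr => j _.
by rewrite /expected_posterior mulr_sumr; apply: eq_bigr => w _; ring.
Qed.

Lemma expected_sq_err_le_kappa t :
  expected_sq_err t P policy X0 theta P0 i0 <= kappa theta i0.
Proof.
apply: (@le_trans _ _ (\sum_(w : t.-tuple (S * S))
                         traj_prob P policy X0 (theta i0) w * kappa theta i0)).
  apply: ler_sum => w _; apply: ler_wpM2l; first exact: traj_prob_ge0.
  rewrite -[X in _ <= X]mul1r -(sum_posterior w) mulr_suml.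
  apply: ler_sum => j _; apply: ler_wpM2l; first exact: posterior_ge0.
  exact: sqr_dist_le_kappa.
by rewrite -mulr_suml ler_piMl ?sqr_ge0 ?sum_traj_prob_le1 ?theta_gt0.
Qed.

Lemma expected_posterior_ge0 t j : 0 <= expected_posterior t j.
Proof.
by apply: sumr_ge0 => w _; rewrite mulr_ge0 ?traj_prob_ge0 ?posterior_ge0 ?theta_gt0.
Qed.

Lemma expected_posterior_le_ratio t j : expected_posterior t j <= P0 j / P0 i0.
Proof.
apply: le_trans (ler_sum _ (fun w _ => traj_prob_posterior_le w j)) _.
by rewrite -mulr_sumr ler_piMr ?prior_ratio_ge0 ?sum_traj_prob_le1.
Qed.

Lemma expected_posterior_le_bhattacharyya t j : DP < 1 / 2 ->
  expected_posterior t j <= Num.sqrt (P0 j / P0 i0) *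
    expR (- (c0const DP theta i0 ^+ 2 * (theta j - theta i0) ^+ 2 * t%:R / 2)).
Proof.
move=> DP1; have ratio0 := prior_ratio_ge0 j.
have thI k : 1 <= theta k <= theta_max theta i0 by rewrite theta_ge1 theta_max_ge.
apply: (@le_trans _ _ (\sum_(w : t.-tuple (S * S)) Num.sqrt (P0 j / P0 i0) *
   Num.sqrt (traj_prob P policy X0 (theta j) w * traj_prob P policy X0 (theta i0) w))).
  apply: ler_sum => w _; rewrite -sqrtrM // [X in Num.sqrt X]mulrA.
  apply: le_sqrt_mul; first by rewrite mulr_ge0 ?traj_prob_ge0 ?posterior_ge0 ?theta_gt0.
  - exact: traj_prob_posterior_le.
  - by rewrite ler_piMr ?traj_prob_ge0 ?posterior_le1 ?theta_gt0.
rewrite -mulr_sumr; apply: ler_wpM2l; first exact: sqrtr_ge0.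
apply: le_trans (sum_sqrt_traj_prob_le t DP1 (thI j) (thI i0)) _.
rewrite -expRM_natl (_ : t%:R * _ =
  - (c0const DP theta i0 ^+ 2 * (theta j - theta i0) ^+ 2 * t%:R / 2)) //.
by rewrite /c0const /entropy_floor; ring.
Qed.

Lemma sq_gap_expected_posterior_le t j : DP < 1 / 2 -> (2 < t)%N -> j != i0 ->
  1 <= K%:R * kappa theta i0 * t%:R ^+ 2 ->
  (theta j - theta i0) ^+ 2 * expected_posterior t j <=
  P0 j / P0 i0 * (3 / (expR 1 * c0const DP theta i0 ^+ 2 * t%:R) *
     expR (- (c0const DP theta i0 ^+ 2 * Delta_theta theta i0 ^+ 2 * t%:R) +
           Num.sqrt (2 * Bconst DP theta i0 ^+ 2 * t%:R *
                     ln (K%:R * kappa theta i0 * t%:R ^+ 2))))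
  + 1 / (K%:R * t%:R ^+ 2).
Proof.
move=> DP1 t2 ji Z1; have DPI : 0 < DP < 1 / 2 by rewrite DP_gt0.
have DP01 : 0 < DP < 1 by rewrite DP_gt0 /=; lra.
have c0I := c0const_in01 theta i0 theta_ge1 DP DP01; have /andP[c00 _] := c0I.
set c0 := c0const DP theta i0 in c0I c00 *; set B := Bconst DP theta i0.
have t3 : 3 <= t%:R :> R by rewrite ler_nat.
have K1 : 1 <= K%:R :> R by rewrite ler1n (leq_ltn_trans (leq0n i0) (ltn_ord i0)).
have hB : 16 * c0 ^+ 2 * (theta j - theta i0) ^+ 2 <= B ^+ 2.
  have hB4 := Bconst_ge theta i0 theta_ge1 DP j DPI; rewrite -/c0 -/B in hB4.
  have x0 := mulr_ge0 (mulr_ge0 (ler0n R 4) (ltW c00)) (normr_ge0 (theta j - theta i0)).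
  by have := ler_pM x0 x0 hB4 hB4; rewrite -!expr2 !exprMn real_normK ?num_real; lra.
have yv : c0 ^+ 2 * Delta_theta theta i0 ^+ 2 * t%:R
            <= c0 ^+ 2 * (theta j - theta i0) ^+ 2 * t%:R.
  have /andP[D0 Dle] := Delta_theta_le theta i0 j ji.
  have D2 : Delta_theta theta i0 ^+ 2 <= (theta j - theta i0) ^+ 2.
    by rewrite -[(theta j - theta i0) ^+ 2]real_normK ?num_real // ler_sqr ?nnegrE.
  by apply: ler_wpM2r; [exact: ler0n | apply: ler_wpM2l; [exact: sqr_ge0 | exact: D2]].
apply: sq_gap_mass_le => //.
- by rewrite sqr_ge0 sqr_dist_le_kappa.
- by rewrite expected_posterior_ge0 expected_posterior_le_ratio.
- exact: expected_posterior_le_bhattacharyya.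
Qed.

Lemma expected_sq_err_le_inv_sqr t : (0 < t)%N ->
  K%:R * kappa theta i0 * t%:R ^+ 2 < 1 ->
  expected_sq_err t P policy X0 theta P0 i0 <= 1 / t%:R ^+ 2.
Proof.
move=> t0 Z_lt1; apply: le_trans (expected_sq_err_le_kappa t) _.
have K1 : 1 <= K%:R :> R by rewrite ler1n (leq_ltn_trans (leq0n i0) (ltn_ord i0)).
have kt0 : 0 <= kappa theta i0 * t%:R ^+ 2 by rewrite mulr_ge0 ?sqr_ge0.
rewrite ler_pdivlMr ?exprn_gt0 ?ltr0n //.
by have := ler_wpM2r kt0 K1; rewrite mul1r mulrA; lra.
Qed.

End Inference.

End Model.

Theorem lemma6 (R : realType) (S : finType) (P : seq S -> S -> R) (DP : R)
  (K : nat) (theta : 'I_K -> R) (P0 : 'I_K -> R) (i0 : 'I_K)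
  (pi : seq (S * S) -> S -> R) (X0 : seq S) (t : nat) :
  0 < DP -> DP < 1 / 2 ->
  (forall X, \sum_(s : S) P X s = 1) ->
  (forall X s, DP <= P X s <= 1 - DP) ->
  injective theta ->
  (forall j, 1 <= theta j) ->
  (forall j, 0 < P0 j) -> \sum_(j < K) P0 j = 1 ->
  (forall h a, 0 <= pi h a) -> (forall h, \sum_(a : S) pi h a = 1) ->
  (2 < t)%N ->
  let c0 := c0const DP theta i0 in
  let B := Bconst DP theta i0 in
  expected_sq_err t P pi X0 theta P0 i0 <=
    3 / (expR 1 * c0 ^+ 2 * t%:R) * ((1 - P0 i0) / P0 i0) *
    expR (- (c0 ^+ 2 * (Delta_theta theta i0) ^+ 2 * t%:R)
          + Num.sqrt (2 * B ^+ 2 * t%:R *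
                      ln (K%:R * kappa theta i0 * t%:R ^+ 2)))
    + 1 / t%:R ^+ 2.
Proof.
(* Injectivity of [theta] is not needed: an index with [theta j = theta i0]
   contributes nothing to the error. *)
move=> DP0 DP1 P_sum1 P_range _ theta_ge1 P0_gt0 P0_sum1 pi_ge0 pi_sum1 t2; cbv zeta.
have t_pos : (0 < t)%N by case: t t2.
have K_pos : (0 < K)%N := leq_ltn_trans (leq0n i0) (ltn_ord i0).
have prior_rest : \sum_(j < K | j != i0) P0 j = 1 - P0 i0.
  by have := P0_sum1; rewrite (bigD1 i0) //=; lra.
have [Z_lt1|Z_ge1] := ltrP (K%:R * kappa theta i0 * t%:R ^+ 2) 1.
  apply: le_trans (expected_sq_err_le_inv_sqr DP0 P_sum1 P_range pi_ge0 pi_sum1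
    theta_ge1 P0_gt0 t t_pos Z_lt1) _.
  have rest0 : 0 <= (1 - P0 i0) / P0 i0.
    rewrite divr_ge0 ?(ltW (P0_gt0 i0)) // -prior_rest.
    by apply: sumr_ge0 => j _; apply: ltW.
  have coef0 : 0 <= 3 / (expR 1 * c0const DP theta i0 ^+ 2 * t%:R).
    exact: divr_ge0 (ler0n _ 3) (mulr_ge0 (mulr_ge0 (expR_ge0 _) (sqr_ge0 _)) (ler0n _ _)).
  by rewrite lerDr (mulr_ge0 (mulr_ge0 coef0 rest0) (expR_ge0 _)).
rewrite expected_sq_errE (bigD1 i0) //= subrr expr0n mul0r add0r.
apply: le_trans (ler_sum _ (fun j ji => sq_gap_expected_posterior_le DP0 P_sum1 P_range
  pi_ge0 pi_sum1 theta_ge1 P0_gt0 t j DP1 t2 ji Z_ge1)) _.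
have Kt0 : 0 < K%:R * t%:R ^+ 2 :> R by rewrite mulr_gt0 ?exprn_gt0 ?ltr0n.
rewrite big_split /=; apply: lerD.
  by rewrite -!mulr_suml prior_rest mulrCA mulrA lexx.
apply: le_trans (_ : _ <= \sum_(j < K) 1 / (K%:R * t%:R ^+ 2)) _.
  by rewrite [X in _ <= X](bigD1 i0) //= lerDr divr_ge0 // ltW.
rewrite sumr_const card_ord -mulr_natl le_eqVlt; apply/orP; left; apply/eqP.
by field; rewrite !pnatr_eq0 -!lt0n t_pos K_pos.
Qed.
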